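(* Let $Y$ be a Young diagram with $n$ boxes and $Q$ a constant symmetric $n\times n$ matrix. Let $V_{Y;Q}(t)$ be the unique solution of $$\dot V=-\Gamma_1V-V\Gamma_1^T-Q-V\Gamma_2V,\qquad \lim_{t\to0^+}V^{-1}=0,$$ on its maximal interval of definition in $(0,+\infty)$. Then $V_{Y;Q}$ is monotone non-increasing, i.e. $\dot V_{Y;Q}(t)\le0$ (as a symmetric matrix) for all $t$ in that interval.
   Context: A Young diagram $Y$ has rows of lengths $n_1\ge\dots\ge n_k$, $\sum n_a=n$; boxes are labelled $ai$ with $a$ the row and $i=1,\dots,n_a$ the position in the row. $\Gamma_1=\Gamma_1(Y)$, $\Gamma_2=\Gamma_2(Y)$ are the $n\times n$ matrices indexed by boxes with $(\Gamma_1)_{ai,bj}=\delta_{ab}\delta_{i,j-1}$ and $(\Gamma_2)_{ai,bj}=\delta_{ab}\delta_{i1}\delta_{j1}$. The limit condition means $V(t)$ is invertible for small $t>0$ and $V(t)^{-1}\to0$ as $t\to0^+$; such a solution exists and is unique. *)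

From HB Require Import structures.
From mathcomp Require Import all_boot all_order all_algebra.
From mathcomp Require Import all_classical all_reals all_analysis.
Set Implicit Arguments. Unset Strict Implicit. Unset Printing Implicit Defensive.
Import Order.TTheory GRing.Theory Num.Theory.
Import numFieldNormedType.Exports.
Local Open Scope classical_set_scope.
Local Open Scope ring_scope.

(* A Young diagram is given by its sequence of row lengths [s = [:: n_1; ...; n_k]],
   with n_1 >= ... >= n_k >= 1.  It has n = sumn s boxes.  The boxes are enumerated
   row by row: box p : 'I_(sumn s) lies in row [box_row s p] (0-based) at position
   [box_pos s p] (0-based) in that row. *)
Definition young_diagram (s : seq nat) : bool :=
  sorted geq s && all (fun m => 0 < m)%N s.

Definition box_row (s : seq nat) (p : nat) : nat := reshape_index s p.
Definition box_pos (s : seq nat) (p : nat) : nat := reshape_offset s p.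

Section Gammas.
Variable R : realType.
Variable s : seq nat.

(* (Gamma_1)_{ai,bj} = delta_{ab} delta_{i,j-1} *)
Definition Gamma1 : 'M[R]_(sumn s) :=
  \matrix_(p, q) ((box_row s p == box_row s q) &&
                  ((box_pos s p).+1 == box_pos s q))%:R.

(* (Gamma_2)_{ai,bj} = delta_{ab} delta_{i1} delta_{j1} (first box = offset 0) *)
Definition Gamma2 : 'M[R]_(sumn s) :=
  \matrix_(p, q) [&& box_row s p == box_row s q,
                     box_pos s p == 0%N & box_pos s q == 0%N]%:R.

Definition mxderiv (V : R -> 'M[R]_(sumn s)) (t : R) : 'M[R]_(sumn s) :=
  \matrix_(i, j) derive1 (fun u => V u i j) t.

Definition riccati_sol (Q : 'M[R]_(sumn s)) (T : \bar R)
    (V : R -> 'M[R]_(sumn s)) : Prop :=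
  (0%:E < T)%E /\
  (forall t, 0 < t -> (t%:E < T)%E ->
     forall i j, derivable (fun u => V u i j) t 1 /\
       derive1 (fun u => V u i j) t =
         (- (Gamma1 *m V t) - V t *m Gamma1^T - Q - V t *m Gamma2 *m V t) i j) /\
  (\forall t \near 0^'+, V t \in unitmx) /\
  (forall i j, (fun t => invmx (V t) i j) @ 0^'+ --> 0).

Definition riccati_maximal (Q : 'M[R]_(sumn s)) (T : \bar R)
    (V : R -> 'M[R]_(sumn s)) : Prop :=
  riccati_sol Q T V /\
  forall (T' : \bar R) (W : R -> 'M[R]_(sumn s)), riccati_sol Q T' W -> (T' <= T)%E.

Definition nsd (A : 'M[R]_(sumn s)) : Prop :=
  forall x : 'cV[R]_(sumn s), (x^T *m A *m x) 0 0 <= 0.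

End Gammas.

(* Differentiating the equation shows that, once V is symmetric, D := -V' solves the linear
   equation D' = A^T D + D A with A = -(G1^T + G2 V), and such flows preserve positive
   semidefiniteness; so it suffices to have D >= 0 at one early time t0.  Near 0 the inverse
   W = V^-1 exists, tends to 0 and solves W' = W G1 + G1^T W + W Q W + G2.  Its derivative
   X := W' solves X' = B^T X + X B with B = G1 + Q W and tends to G2 >= 0, hence X(t0) >= 0
   and D(t0) = V X V >= 0.  Symmetry is a Gronwall argument: W - W^T, and later V - V^T,
   solve linear equations and vanish at the initial time. *)

From HB Require Import structures.
From mathcomp Require Import all_boot all_order all_algebra.
From mathcomp Require Import all_classical all_reals all_analysis.
From mathcomp Require Import ring lra.
Import Order.TTheory GRing.Theory Num.Theory.
Import numFieldNormedType.Exports.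

Set Implicit Arguments. Unset Strict Implicit. Unset Printing Implicit Defensive.
Local Open Scope classical_set_scope.
Local Open Scope ring_scope.

Section RealFunctions.
Variable R : realType.

Lemma is_derive_mul (f g : R -> R) (df dg t : R) :
  is_derive t 1 f df -> is_derive t 1 g dg ->
  is_derive t 1 (fun u => f u * g u) (f t * dg + g t * df).
Proof. exact: is_deriveM. Qed.

Lemma is_derive_expRM (k t : R) :
  is_derive t 1 (fun u => expR (k * u)) (k * expR (k * t)).
Proof.
rewrite mulrC; apply: (is_derive1_comp (f := expR)).
by have := is_derive_mul (is_derive_cst k t 1) (is_derive_id t 1); rewrite mulr1 mulr0 addr0.
Qed.

Lemma is_derive_quotientP (f : R -> R) (t l : R) :
  is_derive t 1 f l <-> (fun h => h^-1 * (f (h + t) - f t)) @ 0^' --> l.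
Proof.
have quotE : (fun h : R => h^-1 *: ((f \o shift t) (h *: 1) - f t)) =
             (fun h => h^-1 * (f (h + t) - f t)).
  by apply/funext => h; rewrite /= /GRing.scale /= mulr1.
split=> [Hd | Hq].
  by rewrite -quotE -(@derive_val _ _ _ _ _ _ _ Hd); exact: (@ex_derive _ _ _ _ _ _ _ Hd).
rewrite -quotE in Hq; apply: DeriveDef; first exact: (cvgP _ Hq).
by rewrite /derive; apply: cvg_lim.
Qed.

Lemma cvg_shift0 (T : Type) (f : R -> T) (t : R) (F : set_system T) :
  f u @[u --> t] --> F -> f (h + t) @[h --> 0^'] --> F.
Proof.
move=> H; have : (f \o shift t) x @[x --> (0 : R)] --> F by rewrite cvg_comp_shift add0r.
exact: cvg_within_filter.
Qed.

Lemma near_at_right_itv (a : R) (P : R -> Prop) : (\forall s \near a^'+, P s) ->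
  exists2 e : R, 0 < e & forall s, a < s -> s < a + e -> P s.
Proof.
rewrite near_withinE => /nbhs_normP [e /= e0 He]; exists e => // s ae se.
by apply: He => //=; rewrite distrC gtr0_norm ?subr_gt0 // ltrBlDl.
Qed.

Lemma continuous_induction (a b : R) (P : R -> Prop) :
  (\forall s \near a^'+, P s) ->
  (forall tau, a < tau -> tau <= b -> (forall s, a < s -> s < tau -> P s) ->
     \forall s \near tau, P s) ->
  forall s, a < s -> s <= b -> P s.
Proof.
move=> Pa Pstep s0 as0 s0b; apply: contrapT => nPs0.
pose B := [set s | [/\ a < s, s <= b & ~ P s]].
have B_inf : has_inf B by split; [exists s0 | exists a => s [/ltW]].
have inf_le s : B s -> inf B <= s by exact: (ge_inf B_inf.2).
have [d d_gt0 Pd] := near_at_right_itv Pa.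
have a_lt_inf : a < inf B.
  suff : a + d <= inf B by lra.
  apply: lb_le_inf; first by exists s0.
  by move=> s [a_s sb nPs]; rewrite leNgt; apply/negP => sd; exact/nPs/Pd.
have inf_le_b : inf B <= b by apply: le_trans (inf_le s0 (And3 as0 s0b nPs0)) s0b.
have P_below s : a < s -> s < inf B -> P s.
  move=> a_s s_lt; apply: contrapT => nPs.
  by have := inf_le s (And3 a_s (ltW (lt_le_trans s_lt inf_le_b)) nPs); lra.
have /nbhs_normP [e /= e_gt0 Pe] := Pstep _ a_lt_inf inf_le_b P_below.
have [s Bs s_lt] := inf_adherent e_gt0 B_inf.
have inf_s := inf_le s Bs; case: Bs => _ _; apply; apply: Pe => /=.
by rewrite distrC ger0_norm ?subr_ge0 //; lra.
Qed.

Lemma is_derive_le0_of_left_min (h : R -> R) (a t d : R) :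
  a < t -> (forall s, a < s -> s < t -> h t <= h s) -> is_derive t 1 h d -> d <= 0.
Proof.
move=> a_t hmin /is_derive_quotientP /cvg_dnbhs_at_left quot_cvg.
rewrite -(cvg_lim _ quot_cvg) //; apply: limr_le; first exact: cvgP quot_cvg.
near=> k.
have k_lt0 : k < 0 by near: k; exact: nbhs_left_lt.
have a_kt : 0 - k < t - a by near: k; apply: nbhs_left_ltBl; rewrite subr_gt0.
apply: mulr_le0_ge0; first by rewrite invr_le0 ltW.
by rewrite subr_ge0 hmin; lra.
Unshelve. all: by end_near.
Qed.

Lemma bounded_on_oc (f : R -> R) (a b l : R) : a < b ->
  (forall s, a < s -> s <= b -> f x @[x --> s] --> f s) -> f x @[x --> a^'+] --> l ->
  exists c, forall s, a < s -> s <= b -> f s <= c.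
Proof.
move=> ab f_cont f_lim.
have /near_at_right_itv [d d_gt0 fd] : \forall s \near a^'+, f s < l + 1.
  by apply: (@cvgr_lt R _ _ _ _ _ f_lim); lra.
pose s0 := Num.min (a + d / 2) b.
have a_s0 : a < s0 by rewrite lt_min; apply/andP; split; lra.
have s0_b : s0 <= b by rewrite ge_min lexx orbT.
have s0_d : s0 < a + d by rewrite gt_min; apply/orP; left; lra.
have : {within `[s0, b], continuous f}.
  apply: continuous_in_subspaceT => x; rewrite inE /= in_itv /= => /andP [? ?].
  by apply: f_cont; lra.
move=> /(EVT_max s0_b) [c _ fc]; exists (Num.max (l + 1) (f c)) => s a_s s_b.
case: (ltrP s s0) => [s_lt | s_ge]; rewrite le_max.
  by rewrite ltW ?fd //; lra.
by rewrite fc ?orbT // in_itv /= s_ge s_b.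
Qed.

(* phi(s) e^(-L s) is nonincreasing on (a, b] and tends to a nonpositive limit at a. *)
Lemma gronwall_vanish (phi dphi : R -> R) (L a b : R) : a < b -> 0 <= L ->
  (forall s, a < s -> s <= b -> is_derive s 1 phi (dphi s)) ->
  (forall s, a < s -> s <= b -> dphi s <= L * phi s) ->
  phi x @[x --> a^'+] --> 0 -> phi b <= 0.
Proof.
move=> ab L_ge0 phi_der phi_le phi_lim.
pose g s := expR (- L * s); pose psi s := phi s * g s.
have g_gt0 s : 0 < g s by exact: expR_gt0.
have psi_der s : a < s -> s <= b ->
    is_derive s 1 psi (phi s * (- L * g s) + g s * dphi s).
  by move=> a_s s_b; exact: is_derive_mul (phi_der s a_s s_b) (is_derive_expRM _ _).
have psi_nonincr s : a < s -> s < b -> psi b <= psi s.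
  move=> a_s s_b; apply: (@ler0_derive1_le_cc R psi s b); rewrite ?in_itv /= ?lexx ?ltW //.
  - by move=> x; rewrite in_itv /= => /andP [? ?]; case: (psi_der x) => //; lra.
  - move=> x; rewrite in_itv /= => /andP [? ?].
    have [a_x x_b] : a < x /\ x <= b by split; lra.
    rewrite derive1E (@derive_val _ _ _ _ _ _ _ (psi_der x a_x x_b)).
    have := phi_le x a_x x_b; have := g_gt0 x; nra.
  - apply: derivable_within_continuous => x; rewrite in_itv /= => /andP [? ?].
    by case: (psi_der x) => //; lra.
suff psi_b_le0 : psi b <= 0 by rewrite -(pmulr_lle0 _ (g_gt0 b)).
apply/ler_addgt0Pr => e e_gt0; rewrite add0r.
have /near_at_right_itv [d d_gt0 phi_small] : \forall s \near a^'+, phi s < e / g a.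
  by apply: (@cvgr_lt R _ _ _ _ _ phi_lim); rewrite divr_gt0.
pose s := Num.min (a + d / 2) ((a + b) / 2).
have a_s : a < s by rewrite lt_min; apply/andP; split; lra.
have s_b : s < b by rewrite gt_min; apply/orP; right; lra.
have s_d : s < a + d by rewrite gt_min; apply/orP; left; lra.
apply: le_trans (psi_nonincr s a_s s_b) _.
have g_s_a : g s <= g a by rewrite /g ler_expR !mulNr lerN2 ler_wpM2l //; lra.
have := phi_small s a_s s_d; have := g_gt0 s; have := g_gt0 a.
rewrite ltr_pdivlMr // /psi; nra.
Qed.

Lemma near_at_right_start (P : R -> Prop) (a t : R) : a < t -> (\forall s \near a^'+, P s) ->
  exists t0, [/\ a < t0, t0 < t & forall u, a < u -> u <= t0 -> \forall v \near u, P v].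
Proof.
move=> a_t /near_at_right_itv [d d_gt0 Pd].
exists (Num.min ((a + t) / 2) (a + d / 2)); split.
- by rewrite lt_min; apply/andP; split; lra.
- by rewrite gt_min; apply/orP; left; lra.
- move=> u a_u; rewrite le_min => /andP [_ u_d].
  have : u \in `]a, a + d[ by rewrite in_itv /=; apply/andP; split; lra.
  by move=> /near_in_itvoo; apply: filterS => v; rewrite in_itv /= => /andP [? ?]; exact: Pd.
Qed.

End RealFunctions.

Section FrobeniusForm.
Variables (R : realDomainType) (m p : nat).
Implicit Types A B C : 'M[R]_(m, p).

Definition frobdot A B : R := \sum_i \sum_j A i j * B i j.
Definition frobsq A : R := frobdot A A.
Definition mxnorm1 A : R := \sum_i \sum_j `|A i j|.

Lemma mxnorm1_ge0 A : 0 <= mxnorm1 A.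
Proof. by apply: sumr_ge0 => i _; apply: sumr_ge0. Qed.

Lemma mxnorm10 : mxnorm1 0 = 0.
Proof. by rewrite /mxnorm1 big1 // => i _; rewrite big1 // => j _; rewrite mxE normr0. Qed.

Lemma frobsq0 : frobsq 0 = 0.
Proof. by rewrite /frobsq /frobdot big1 // => i _; rewrite big1 // => j _; rewrite mxE mulr0. Qed.

Lemma frobsq_ge0 A : 0 <= frobsq A.
Proof. by apply: sumr_ge0 => i _; apply: sumr_ge0 => j _; rewrite -expr2 sqr_ge0. Qed.

Lemma sqr_le_frobsq A i j : A i j ^+ 2 <= frobsq A.
Proof.
rewrite /frobsq /frobdot (bigD1 i) //= (bigD1 j) //= -expr2 -addrA lerDl.
by apply: addr_ge0; do ?[apply: sumr_ge0 => ? _]; rewrite -expr2 sqr_ge0.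
Qed.

Lemma normM_le_frobsq A i j k l : `|A i j * A k l| <= frobsq A.
Proof.
rewrite normrM.
wlog le_ij_kl : i j k l / `|A i j| <= `|A k l|.
  move=> W; case: (lerP `|A i j| `|A k l|) => h; first exact: W.
  by rewrite mulrC; apply: W; exact: ltW.
apply: le_trans (sqr_le_frobsq A k l).
by rewrite -real_normK ?num_real // expr2 ler_wpM2r.
Qed.

Lemma frobsq_eq0 A : frobsq A = 0 -> A = 0.
Proof.
move=> A0; apply/matrixP => i j; rewrite mxE; apply/eqP.
by rewrite -sqrf_eq0 eq_le sqr_ge0 andbT -A0 sqr_le_frobsq.
Qed.

Lemma frobsq_gt0 A : A != 0 -> 0 < frobsq A.
Proof. by move=> A_neq0; rewrite lt_def frobsq_ge0 andbT; apply: contra A_neq0 => /eqP/frobsq_eq0->. Qed.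

Lemma frobdotDr A B C : frobdot A (B + C) = frobdot A B + frobdot A C.
Proof.
rewrite /frobdot -big_split; apply: eq_bigr => i _; rewrite -big_split.
by apply: eq_bigr => j _; rewrite mxE mulrDr.
Qed.

End FrobeniusForm.

Section FrobeniusProductBounds.
Variables (R : realDomainType) (n : nat).
Implicit Types A Z : 'M[R]_n.

Lemma frobdot_mulmxr_le Z A : `|frobdot Z (Z *m A)| <= (mxnorm1 A * frobsq Z) *+ n.
Proof.
have -> : (mxnorm1 A * frobsq Z) *+ n = \sum_(i < n) \sum_(j < n) \sum_(k < n) `|A k j| * frobsq Z.
  rewrite sumr_const card_ord /mxnorm1 mulr_suml.
  by under eq_bigr do rewrite mulr_suml; rewrite exchange_big.
apply: le_trans (ler_norm_sum _ _ _) _; apply: ler_sum => i _.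
apply: le_trans (ler_norm_sum _ _ _) _; apply: ler_sum => j _.
rewrite mxE mulr_sumr; apply: le_trans (ler_norm_sum _ _ _) _; apply: ler_sum => k _.
by rewrite mulrA normrM mulrC ler_wpM2l // normM_le_frobsq.
Qed.

Lemma frobdot_mulmxl_le Z B : `|frobdot Z (B *m Z)| <= (mxnorm1 B * frobsq Z) *+ n.
Proof.
have -> : (mxnorm1 B * frobsq Z) *+ n = \sum_(j < n) \sum_(i < n) \sum_(k < n) `|B i k| * frobsq Z.
  rewrite sumr_const card_ord /mxnorm1 mulr_suml.
  by under eq_bigr do rewrite mulr_suml.
rewrite [X in _ <= X]exchange_big /=.
apply: le_trans (ler_norm_sum _ _ _) _; apply: ler_sum => i _.
apply: le_trans (ler_norm_sum _ _ _) _; apply: ler_sum => j _.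
rewrite mxE mulr_sumr; apply: le_trans (ler_norm_sum _ _ _) _; apply: ler_sum => k _.
by rewrite mulrCA normrM ler_wpM2l // normM_le_frobsq.
Qed.

End FrobeniusProductBounds.

Section QuadraticForms.
Variables (R : realFieldType) (n : nat).
Implicit Types (A E M : 'M[R]_n) (x y : 'cV[R]_n).

Definition bform A x y : R := (x^T *m A *m y) 0 0.
Definition qform A x : R := bform A x x.
Definition psd A : Prop := forall x, 0 <= qform A x.

Lemma bformE A x y : bform A x y = \sum_i \sum_j x i 0 * A i j * y j 0.
Proof.
rewrite /bform mxE; under eq_bigr => j _ do rewrite mxE big_distrl /=.
by rewrite exchange_big /=; apply: eq_bigr => i _; apply: eq_bigr => j _; rewrite !mxE.
Qed.

Lemma bformD A M x y : bform (A + M) x y = bform A x y + bform M x y.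
Proof. by rewrite /bform mulmxDr mulmxDl mxE. Qed.

Lemma bformN A x y : bform (- A) x y = - bform A x y.
Proof. by rewrite /bform mulmxN mulNmx mxE. Qed.

Lemma bformZ c A x y : bform (c *: A) x y = c * bform A x y.
Proof. by rewrite /bform -scalemxAr -scalemxAl mxE. Qed.

Lemma bform_trmx A x y : bform A^T x y = bform A y x.
Proof. by rewrite /bform -[x^T *m A^T *m y]trmxK [in LHS]mxE !trmx_mul !trmxK mulmxA. Qed.

Lemma qformD A M x : qform (A + M) x = qform A x + qform M x.
Proof. exact: bformD. Qed.

Lemma qformZ c A x : qform (c *: A) x = c * qform A x.
Proof. exact: bformZ. Qed.

Lemma qformN A x : qform (- A) x = - qform A x.
Proof. exact: bformN. Qed.

Lemma qform1 x : qform 1%:M x = frobsq x.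
Proof.
rewrite /qform /bform mulmx1 mxE /frobsq /frobdot.
by apply: eq_bigr => i _; rewrite big_ord1 mxE.
Qed.

Lemma qform_kernel A x : A *m x = 0 -> qform A x = 0.
Proof. by move=> Ax; rewrite /qform /bform -mulmxA Ax mulmx0 mxE. Qed.

Lemma normr_qform_le A x : `|qform A x| <= mxnorm1 A * frobsq x.
Proof.
rewrite /qform bformE /mxnorm1 mulr_suml.
apply: le_trans (ler_norm_sum _ _ _) _; apply: ler_sum => i _.
rewrite mulr_suml; apply: le_trans (ler_norm_sum _ _ _) _; apply: ler_sum => j _.
rewrite mulrAC normrM mulrC ler_wpM2l //.
by have := normM_le_frobsq x i 0 j 0.
Qed.

Lemma qform_ge_shift A M x : qform M x - mxnorm1 (A - M) * frobsq x <= qform A x.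
Proof.
have -> : qform A x = qform M x + qform (A - M) x by rewrite /qform -bformD addrC subrK.
rewrite lerD2l lerNl; apply: le_trans (normr_qform_le _ _).
by rewrite -normrN ler_norm.
Qed.

Lemma qform_mulmx A M x : qform (M^T *m A *m M) x = qform A (M *m x).
Proof. by rewrite /qform /bform trmx_mul !mulmxA. Qed.

Lemma psd_congr A M : psd A -> psd (M^T *m A *m M).
Proof. by move=> psdA x; rewrite qform_mulmx. Qed.

Lemma qform_lyapunov_eigvec A E mu x : E^T = E -> E *m x = mu *: x ->
  qform (A^T *m E + E *m A) x = 2 * mu * qform A x.
Proof.
move=> Esym Ex; have xE : x^T *m E = mu *: x^T by rewrite -Esym -trmx_mul Ex linearZ.
rewrite /qform bformD.
have -> : bform (A^T *m E) x x = mu * bform A x x.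
  rewrite /bform -!mulmxA Ex -!scalemxAr mxE !mulmxA; congr (_ * _); exact: bform_trmx.
have -> : bform (E *m A) x x = mu * bform A x x.
  by rewrite /bform mulmxA xE -!scalemxAl mxE.
by ring.
Qed.

Lemma qformDZ A x y c :
  qform A (x + c *: y) = qform A x + c * (bform A x y + bform A y x) + c ^+ 2 * qform A y.
Proof.
rewrite /qform /bform [(x + _)^T]linearD /= [(c *: y)^T]linearZ /=.
rewrite !mulmxDl !mulmxDr -!scalemxAl -!scalemxAr !mxE.
by ring.
Qed.

(* Testing the form at x - K^-1 E^-1 x gives |x|^2 <= K (x^T E x) with K = |E^-1|_1 + 1. *)
Lemma psd_unit_lower E : E^T = E -> psd E -> E \in unitmx ->
  forall x, frobsq x <= (mxnorm1 (invmx E) + 1) * qform E x.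
Proof.
move=> Esym psdE Eunit x.
set K := mxnorm1 (invmx E) + 1; set y := invmx E *m x.
have K_gt0 : 0 < K by rewrite ltr_wpDl ?mxnorm1_ge0.
have Exy : bform E x y = frobsq x.
  by rewrite /bform /y mulmxA -[_ *m E *m _]mulmxA mulmxV // mulmx1 -qform1 /qform /bform mulmx1.
have Eyx : bform E y x = frobsq x by rewrite -bform_trmx Esym.
have Eyy : qform E y <= (K - 1) * frobsq x.
  have -> : qform E y = qform (invmx E)^T x.
    by rewrite -qform_mulmx trmx_inv Esym -mulmxA mulmxV // mulmx1.
  rewrite addrK; apply: le_trans (ler_norm _) _; apply: le_trans (normr_qform_le _ _) _.
  by rewrite /mxnorm1 exchange_big; under eq_bigr do under eq_bigr do rewrite mxE.
have := psdE (x + (- K^-1) *: y); rewrite qformDZ Exy Eyx => h.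
have := frobsq_ge0 x; have K2 : 0 < K ^+ 2 by rewrite exprn_gt0.
have := mulr_ge0 h (ltW K2).
have -> : (qform E x + - K^-1 * (frobsq x + frobsq x) + (- K^-1) ^+ 2 * qform E y) * K ^+ 2 =
          qform E x * K ^+ 2 - 2 * frobsq x * K + qform E y.
  by field; rewrite gt_eqF.
nra.
Qed.

Lemma singular_mx_kernel E : E \notin unitmx -> exists2 x : 'cV[R]_n, x != 0 & E *m x = 0.
Proof.
rewrite unitmxE unitfE negbK -det_tr => /det0P [v v0 vE].
exists v^T; first by rewrite -trmx0 (inj_eq trmx_inj).
by rewrite -[E]trmxK -trmx_mul vE trmx0.
Qed.

End QuadraticForms.

Section EntrywiseLimits.
Variable R : realType.

Definition mxcvg (T : Type) (F : set_system T) m p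
    (f : T -> 'M[R]_(m, p)) (M : 'M[R]_(m, p)) :=
  forall i j, (fun u => f u i j) @ F --> M i j.

Context (T : Type) (F : set_system T) {FF : Filter F}.

Lemma mxcvg_cst m p (M : 'M[R]_(m, p)) : mxcvg F (fun=> M) M.
Proof. by move=> i j; exact: cvg_cst. Qed.

Lemma mxcvgD m p (f g : T -> 'M[R]_(m, p)) M N :
  mxcvg F f M -> mxcvg F g N -> mxcvg F (fun u => f u + g u) (M + N).
Proof. by move=> Hf Hg i j; rewrite mxE; under eq_fun do rewrite mxE; exact: cvgD. Qed.

Lemma mxcvgN m p (f : T -> 'M[R]_(m, p)) M :
  mxcvg F f M -> mxcvg F (fun u => - f u) (- M).
Proof. by move=> Hf i j; rewrite mxE; under eq_fun do rewrite mxE; exact: cvgN. Qed.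

Lemma mxcvgB m p (f g : T -> 'M[R]_(m, p)) M N :
  mxcvg F f M -> mxcvg F g N -> mxcvg F (fun u => f u - g u) (M - N).
Proof. by move=> Hf Hg; apply: mxcvgD => //; exact: mxcvgN. Qed.

Lemma mxcvg_trmx m p (f : T -> 'M[R]_(m, p)) M :
  mxcvg F f M -> mxcvg F (fun u => (f u)^T) M^T.
Proof. by move=> Hf i j; rewrite mxE; under eq_fun do rewrite mxE; exact: Hf. Qed.

Lemma mxcvgM m p r (f : T -> 'M[R]_(m, p)) (g : T -> 'M[R]_(p, r)) M N :
  mxcvg F f M -> mxcvg F g N -> mxcvg F (fun u => f u *m g u) (M *m N).
Proof.
move=> Hf Hg i j; rewrite mxE; under eq_fun do rewrite mxE.
by apply: cvg_big => [|k _]; [exact: add_continuous | exact: cvgM].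
Qed.

Lemma mxcvg_det m (f : T -> 'M[R]_m) M :
  mxcvg F f M -> \det (f u) @[u --> F] --> \det M.
Proof.
move=> Hf; apply: cvg_big => [|s _]; first exact: add_continuous.
apply: cvgM; first exact: cvg_cst.
by apply: cvg_big => [|i _]; [exact: mul_continuous | exact: Hf].
Qed.

Lemma mxcvg_adj m (f : T -> 'M[R]_m) M :
  mxcvg F f M -> mxcvg F (fun u => \adj (f u)) (\adj M).
Proof.
move=> Hf i j; rewrite mxE; under eq_fun do rewrite mxE.
apply: cvgM; first exact: cvg_cst.
by apply: mxcvg_det => k l; rewrite !mxE; under eq_fun do rewrite !mxE; exact: Hf.
Qed.

End EntrywiseLimits.

Lemma mxcvg_invmx (R : realType) (T : Type) (F : set_system T) {FF : ProperFilter F}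
    m (f : T -> 'M[R]_m) M :
  mxcvg F f M -> M \in unitmx -> mxcvg F (fun u => invmx (f u)) (invmx M).
Proof.
move=> Hf HM.
have detM : \det M != 0 by rewrite -unitfE -unitmxE.
have Hdet : \det (f u) @[u --> F] --> \det M by exact: mxcvg_det.
have near_unit : \forall u \near F, f u \in unitmx.
  have : \forall u \near F, `|\det M| / 2 < `|\det (f u)|.
    apply: (@cvgr_gt _ _ _ _ (fun u => `|\det (f u)|) `|\det M|); first exact: (@cvg_norm R R^o _ _ _ _ _ Hdet).
    by rewrite ltr_pdivrMr // ltr_pMr ?normr_gt0 // ltr1n.
  apply: filterS => u Hu; rewrite unitmxE unitfE -normr_gt0.
  by apply: le_lt_trans Hu; rewrite divr_ge0.
move=> i j; apply: (@cvg_trans _ ((fun u => ((\det (f u))^-1 *: \adj (f u)) i j) @ F)).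
  apply: near_eq_cvg; apply: filterS near_unit => u Hu.
  by rewrite /invmx Hu.
rewrite /invmx HM mxE; under eq_fun do rewrite mxE.
by apply: cvgM; [exact: cvgV | exact: mxcvg_adj].
Qed.

Lemma mxcvg_at_right (R : realType) m p (f : R -> 'M[R]_(m, p)) a M :
  mxcvg (nbhs a) f M -> mxcvg a^'+ f M.
Proof. by move=> H i j; apply: cvg_at_right_filter; exact: H. Qed.

Section EntrywiseDerivatives.
Variable R : realType.

Definition is_mxderive m p (t : R) (f : R -> 'M[R]_(m, p)) (D : 'M[R]_(m, p)) :=
  forall i j, is_derive t 1 (fun u => f u i j) (D i j).

Lemma is_mxderive_continuous m p (f : R -> 'M[R]_(m, p)) D t :
  is_mxderive t f D -> mxcvg (nbhs t) f (f t).
Proof.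
move=> Hf i j; have [Hd _] := Hf i j.
by apply: differentiable_continuous; apply/derivable1_diffP.
Qed.

Lemma is_mxderive_cst m p (M : 'M[R]_(m, p)) t : is_mxderive t (fun=> M) 0.
Proof. by move=> i j; rewrite mxE; exact: is_derive_cst. Qed.

Lemma is_mxderiveD m p (f g : R -> 'M[R]_(m, p)) Df Dg t :
  is_mxderive t f Df -> is_mxderive t g Dg ->
  is_mxderive t (fun u => f u + g u) (Df + Dg).
Proof.
move=> Hf Hg i j; rewrite mxE.
have -> : (fun u => (f u + g u) i j) = (fun u => f u i j) + (fun u => g u i j).
  by apply/funext => u; rewrite mxE.
exact: is_deriveD.
Qed.

Lemma is_mxderiveN m p (f : R -> 'M[R]_(m, p)) Df t :
  is_mxderive t f Df -> is_mxderive t (fun u => - f u) (- Df).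
Proof.
move=> Hf i j; rewrite mxE.
have -> : (fun u => (- f u) i j) = - (fun u => f u i j) by apply/funext => u; rewrite mxE.
exact: is_deriveN.
Qed.

Lemma is_mxderiveB m p (f g : R -> 'M[R]_(m, p)) Df Dg t :
  is_mxderive t f Df -> is_mxderive t g Dg ->
  is_mxderive t (fun u => f u - g u) (Df - Dg).
Proof. by move=> Hf Hg; apply: is_mxderiveD => //; exact: is_mxderiveN. Qed.

Lemma is_mxderive_trmx m p (f : R -> 'M[R]_(m, p)) Df t :
  is_mxderive t f Df -> is_mxderive t (fun u => (f u)^T) Df^T.
Proof.
move=> Hf i j; rewrite mxE.
by have -> : (fun u => (f u)^T i j) = (fun u => f u j i) by apply/funext => u; rewrite mxE.
Qed.

Lemma is_mxderiveM m p r (f : R -> 'M[R]_(m, p)) (g : R -> 'M[R]_(p, r)) Df Dg t :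
  is_mxderive t f Df -> is_mxderive t g Dg ->
  is_mxderive t (fun u => f u *m g u) (Df *m g t + f t *m Dg).
Proof.
move=> Hf Hg i j.
have -> : (fun u => (f u *m g u) i j) =
          \sum_(k < p) ((fun u => f u i k) * (fun u => g u k j)).
  by apply/funext => u; rewrite fct_sumE mxE.
have -> : (Df *m g t + f t *m Dg) i j =
          \sum_(k < p) (f t i k *: Dg k j + g t k j *: Df i k).
  rewrite !mxE -big_split /=; apply: eq_bigr => k _.
  by rewrite /GRing.scale /= addrC [g t k j * _]mulrC.
by apply: is_derive_sum => k; exact: is_deriveM.
Qed.

Lemma is_mxderive_scale m p (c : R -> R) (dc : R) (M : 'M[R]_(m, p)) (t : R) :
  is_derive t 1 c dc -> is_mxderive t (fun u => c u *: M) (dc *: M).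
Proof.
move=> Hc i j; rewrite mxE.
have -> : (fun u => (c u *: M) i j) = (fun u => c u * M i j).
  by apply/funext => u; rewrite mxE.
by have := is_derive_mul Hc (is_derive_cst (M i j) t 1); rewrite mulr0 add0r mulrC.
Qed.

(* The quotient identity h^-1 (V(t+h)^-1 - V(t)^-1) = - V(t+h)^-1 (h^-1 (V(t+h) - V(t))) V(t)^-1. *)
Lemma is_mxderive_invmx n (V : R -> 'M[R]_n) U t :
  is_mxderive t V U -> (\forall u \near t, V u \in unitmx) ->
  is_mxderive t (fun u => invmx (V u)) (- (invmx (V t) *m U *m invmx (V t))).
Proof.
move=> HV Hu i j; apply/is_derive_quotientP.
have Vt : V t \in unitmx by exact: nbhs_singleton Hu.
have Hu0 : \forall h \near (0 : R)^', V (h + t) \in unitmx by exact: cvg_shift0 cvg_id _ Hu.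
have invV_cont : mxcvg (nbhs t) (fun u => invmx (V u)) (invmx (V t)).
  exact: mxcvg_invmx (is_mxderive_continuous HV) Vt.
have invV_shift : mxcvg 0^' (fun h => invmx (V (h + t))) (invmx (V t)).
  by move=> k l; exact: cvg_shift0 (invV_cont k l).
have quotV : mxcvg 0^' (fun h : R => h^-1 *: (V (h + t) - V t)) U.
  move=> k l; apply: cvg_trans (proj1 (is_derive_quotientP _ _ _) (HV k l)).
  by apply: near_eq_cvg; near=> h; rewrite !mxE.
have : mxcvg 0^' (fun h => - (invmx (V (h + t)) *m (h^-1 *: (V (h + t) - V t)) *m invmx (V t)))
               (- (invmx (V t) *m U *m invmx (V t))).
  exact: mxcvgN (mxcvgM (mxcvgM invV_shift quotV) (mxcvg_cst (M := invmx (V t)))).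
move=> /(_ i j); apply: cvg_trans; apply: near_eq_cvg; near=> h.
have Vht : V (h + t) \in unitmx by near: h.
rewrite -scalemxAr -scalemxAl mulmxBr mulVmx // mulmxBl mul1mx -mulmxA mulmxV //.
by rewrite mulmx1 !mxE; ring.
Unshelve. all: by end_near.
Qed.

End EntrywiseDerivatives.

Section MatrixFunctions.
Variable R : realType.

Lemma mxcvg_mxnorm1 (T : Type) (F : set_system T) {FF : Filter F} m p
    (f : T -> 'M[R]_(m, p)) M :
  mxcvg F f M -> mxnorm1 (f u) @[u --> F] --> mxnorm1 M.
Proof.
move=> Hf; apply: cvg_big => [|i _]; first exact: add_continuous.
apply: cvg_big => [|j _]; first exact: add_continuous.
exact: (@cvg_norm R R^o).
Qed.

Lemma mxcvg_frobsq (T : Type) (F : set_system T) {FF : Filter F} m p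
    (f : T -> 'M[R]_(m, p)) M :
  mxcvg F f M -> frobsq (f u) @[u --> F] --> frobsq M.
Proof.
move=> Hf; apply: cvg_big => [|i _]; first exact: add_continuous.
apply: cvg_big => [|j _]; first exact: add_continuous.
exact: cvgM.
Qed.

Lemma mxcvg_qform (T : Type) (F : set_system T) {FF : Filter F} n
    (f : T -> 'M[R]_n) M x :
  mxcvg F f M -> qform (f u) x @[u --> F] --> qform M x.
Proof. by move=> Hf; exact: mxcvgM (mxcvgM (mxcvg_cst (M := x^T)) Hf) (mxcvg_cst (M := x)) 0 0. Qed.

Lemma is_mxderive_qform n (f : R -> 'M[R]_n) D t x :
  is_mxderive t f D -> is_derive t 1 (fun u => qform (f u) x) (qform D x).
Proof.
move=> Hf; have := is_mxderiveM (is_mxderiveM (is_mxderive_cst x^T t) Hf) (is_mxderive_cst x t) 0 0.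
by rewrite !mul0mx !mulmx0 add0r addr0.
Qed.

Lemma is_mxderive_frobsq m p (f : R -> 'M[R]_(m, p)) D t :
  is_mxderive t f D -> is_derive t 1 (fun u => frobsq (f u)) (2 * frobdot (f t) D).
Proof.
move=> Hf.
have -> : (fun u => frobsq (f u)) =
          \sum_i \sum_j ((fun u => f u i j) * (fun u => f u i j)).
  by apply/funext => u; rewrite fct_sumE; apply: eq_bigr => i _; rewrite fct_sumE.
have -> : 2 * frobdot (f t) D = \sum_i \sum_j (f t i j *: D i j + f t i j *: D i j).
  rewrite /frobdot mulr_sumr; apply: eq_bigr => i _; rewrite mulr_sumr.
  by apply: eq_bigr => j _; rewrite -mulr2n mulr_natl.
by apply: is_derive_sum => i; apply: is_derive_sum => j; exact: is_deriveM.
Qed.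

Lemma mxnorm1_bounded m p (f : R -> 'M[R]_(m, p)) (a b : R) M : a < b ->
  (forall s, a < s -> s <= b -> mxcvg (nbhs s) f (f s)) -> mxcvg a^'+ f M ->
  exists c, forall s, a < s -> s <= b -> mxnorm1 (f s) <= c.
Proof.
move=> ab f_cont f_lim; apply: (@bounded_on_oc _ _ _ _ (mxnorm1 M)) => //.
  by move=> s a_s s_b; apply: mxcvg_mxnorm1; exact: f_cont.
exact: mxcvg_mxnorm1.
Qed.

Lemma psd_closed (T : Type) (F : set_system T) {FF : ProperFilter F} n
    (f : T -> 'M[R]_n) M :
  mxcvg F f M -> (\forall u \near F, psd (f u)) -> psd M.
Proof.
move=> f_lim f_psd x.
have q_lim : qform (f u) x @[u --> F] --> qform M x by exact: mxcvg_qform.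
rewrite -(cvg_lim _ q_lim) //; apply: limr_ge; first exact: cvgP q_lim.
by apply: filterS f_psd => u; apply.
Qed.

(* A psd invertible matrix is uniformly positive definite, hence stays psd nearby. *)
Lemma psd_near_unit n (E : R -> 'M[R]_n) t :
  mxcvg (nbhs t) E (E t) -> (E t)^T = E t -> psd (E t) -> E t \in unitmx ->
  \forall s \near t, psd (E s).
Proof.
move=> E_cont E_sym E_psd E_unit.
set K := mxnorm1 (invmx (E t)) + 1.
have K_gt0 : 0 < K by rewrite ltr_wpDl ?mxnorm1_ge0.
have dist_lim : mxnorm1 (E s - E t) @[s --> t] --> 0.
  rewrite -(mxnorm10 R n n) -(subrr (E t)).
  by apply: mxcvg_mxnorm1; exact: mxcvgB E_cont (mxcvg_cst (M := E t)).
near=> s => x.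
have close : mxnorm1 (E s - E t) < K^-1.
  by near: s; apply: (@cvgr_lt R _ _ _ _ _ dist_lim); rewrite invr_gt0.
have lower : frobsq x * K^-1 <= qform (E t) x.
  by rewrite ler_pdivrMr // mulrC; exact: psd_unit_lower.
have := ler_wpM2l (frobsq_ge0 x) (ltW close).
have := qform_ge_shift (E s) (E t) x; lra.
Unshelve. all: by end_near.
Qed.

End MatrixFunctions.

Section LinearFlows.
Variables (R : realType) (n : nat).

(* Gronwall for |Z|^2, whose derivative 2 <Z, B Z + Z A> is bounded by a multiple of |Z|^2. *)
Lemma mxflow_vanish (Z A B : R -> 'M[R]_n) (a b cA cB : R) :
  (forall s, a < s -> s <= b -> is_mxderive s Z (B s *m Z s + Z s *m A s)) ->
  (forall s, a < s -> s <= b -> mxnorm1 (A s) <= cA) ->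
  (forall s, a < s -> s <= b -> mxnorm1 (B s) <= cB) ->
  mxcvg a^'+ Z 0 -> forall s, a < s -> s <= b -> Z s = 0.
Proof.
move=> Z_der A_le B_le Z_lim s a_s s_b.
apply: frobsq_eq0; apply/le_anti; rewrite frobsq_ge0 andbT.
apply: (gronwall_vanish (phi := fun u => frobsq (Z u))
  (dphi := fun u => 2 * frobdot (Z u) (B u *m Z u + Z u *m A u))
  (L := 2 * n%:R * (`|cA| + `|cB|)) a_s) => //.
- by move=> u a_u u_s /=; apply: is_mxderive_frobsq; apply: Z_der; lra.
- move=> u a_u u_s /=; have u_b : u <= b by lra.
  have f_ge0 := frobsq_ge0 (Z u).
  have ZA := frobdot_mulmxr_le (Z u) (A u); have ZB := frobdot_mulmxl_le (Z u) (B u).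
  rewrite -mulr_natl in ZA; rewrite -mulr_natl in ZB.
  have hA : n%:R * (mxnorm1 (A u) * frobsq (Z u)) <= n%:R * (`|cA| * frobsq (Z u)).
    by rewrite ler_wpM2l // ler_wpM2r // (le_trans (A_le u a_u u_b)) ?ler_norm.
  have hB : n%:R * (mxnorm1 (B u) * frobsq (Z u)) <= n%:R * (`|cB| * frobsq (Z u)).
    by rewrite ler_wpM2l // ler_wpM2r // (le_trans (B_le u a_u u_b)) ?ler_norm.
  have := ler_norm (frobdot (Z u) (B u *m Z u)); have := ler_norm (frobdot (Z u) (Z u *m A u)).
  rewrite frobdotDr; lra.
- by rewrite -(frobsq0 R n n); exact: mxcvg_frobsq.
Qed.

Section PsdFlow.
Variables (D A : R -> 'M[R]_n) (D0 : 'M[R]_n) (a b c : R).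
Hypotheses (D_sym : forall s, a < s -> s <= b -> (D s)^T = D s)
  (D_der : forall s, a < s -> s <= b -> is_mxderive s D ((A s)^T *m D s + D s *m A s))
  (A_le : forall s, a < s -> s <= b -> mxnorm1 (A s) <= c)
  (D_lim : mxcvg a^'+ D D0) (D0_psd : psd D0).

(* The perturbation eps e^(k u) I grows fast enough to beat the drift 2 x^T A x <= 2|c| |x|^2. *)
Let k := 2 * `|c| + 1.
Let g eps u := eps * expR (k * u).
Let E eps u := D u + g eps u *: 1%:M.

Let k_gt0 : 0 < k.
Proof. by rewrite /k; have := normr_ge0 c; lra. Qed.

Let g_gt0 eps u : 0 < eps -> 0 < g eps u.
Proof. by move=> eps_gt0; rewrite mulr_gt0 ?expR_gt0. Qed.

Let qformE eps u x : qform (E eps u) x = qform (D u) x + g eps u * frobsq x.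
Proof. by rewrite qformD qformZ qform1. Qed.

Let E_der eps s : a < s -> s <= b ->
  is_mxderive s (E eps) ((A s)^T *m D s + D s *m A s + (k * g eps s) *: 1%:M).
Proof.
move=> a_s s_b; apply: is_mxderiveD; first exact: D_der.
apply: is_mxderive_scale; rewrite /g mulrCA -[k * _]mulr1.
by have := is_derive_mul (is_derive_cst eps s 1) (is_derive_expRM k s); rewrite mulr0 addr0 mulr1.
Qed.

Let E_psd_near_start eps : 0 < eps -> \forall s \near a^'+, psd (E eps s).
Proof.
move=> eps_gt0.
have dist : mxnorm1 (D s - D0) @[s --> a^'+] --> 0.
  rewrite -(mxnorm10 R n n) -(subrr D0).
  by apply: mxcvg_mxnorm1; exact: mxcvgB D_lim (mxcvg_cst (M := D0)).
near=> s => x.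
have a_s : a < s by near: s; exact: nbhs_right_gt.
have close : mxnorm1 (D s - D0) < g eps a.
  by near: s; apply: (@cvgr_lt R _ _ _ _ _ dist); exact: g_gt0.
have g_a_s : g eps a <= g eps s.
  by rewrite ler_pM2l // ler_expR ler_pM2l // ltW.
have f_ge0 := frobsq_ge0 x.
have := ler_wpM2r f_ge0 (ltW (lt_le_trans close g_a_s)).
have := qform_ge_shift (D s) D0 x; have := D0_psd x; rewrite qformE; lra.
Unshelve. all: by end_near.
Qed.

(* At a first failure time tau, a kernel vector x of E tau would make u |-> x^T E(u) x
   decrease to 0 at tau, but its derivative there is eps e^(k tau) (k |x|^2 - 2 x^T A x) > 0. *)
Let E_unit eps tau : 0 < eps -> a < tau -> tau <= b ->
  (forall s, a < s -> s < tau -> psd (E eps s)) -> E eps tau \in unitmx.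
Proof.
move=> eps_gt0 a_tau tau_b E_psd; apply: contraT => /singular_mx_kernel [x x_neq0 Ex].
have Dx : D tau *m x = (- g eps tau) *: x.
  by apply/eqP; move: Ex; rewrite mulmxDl -scalemxAl mul1mx scaleNr -addr_eq0 => /eqP.
have := is_derive_le0_of_left_min a_tau _ (is_mxderive_qform x (E_der eps a_tau tau_b)).
rewrite qform_kernel //= => /(_ (fun s a_s s_tau => E_psd s a_s s_tau x)).
rewrite qformD qformZ qform1 (qform_lyapunov_eigvec _ (D_sym a_tau tau_b) Dx).
have qA : qform (A tau) x <= `|c| * frobsq x.
  apply: le_trans (ler_norm _) (le_trans (normr_qform_le _ _) _).
  by rewrite ler_wpM2r ?frobsq_ge0 // (le_trans (A_le a_tau tau_b)) ?ler_norm.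
have := frobsq_gt0 x_neq0; have := g_gt0 tau eps_gt0; rewrite /k; nra.
Qed.

Let E_psd eps : 0 < eps -> forall s, a < s -> s <= b -> psd (E eps s).
Proof.
move=> eps_gt0; apply: continuous_induction; first exact: E_psd_near_start.
move=> tau a_tau tau_b E_psd_below.
have E_cont := is_mxderive_continuous (E_der eps a_tau tau_b).
have E_tau_psd : psd (E eps tau).
  apply: (psd_closed (F := tau^'-)) => [i j|]; first exact: cvg_at_left_filter (E_cont i j).
  near=> s; apply: E_psd_below; near: s; last exact: nbhs_left_lt.
  by apply: nbhs_left_gt.
apply: psd_near_unit E_cont _ E_tau_psd (E_unit eps_gt0 a_tau tau_b E_psd_below).
by rewrite /E linearD /= D_sym // linearZ /= tr_scalar_mx.
Unshelve. all: by end_near.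
Qed.

Lemma psd_flow s : a < s -> s <= b -> psd (D s).
Proof.
move=> a_s s_b x; apply/ler_addgt0Pr => e e_gt0.
pose eps := e / (expR (k * s) * (frobsq x + 1)).
have f_ge0 := frobsq_ge0 x; have ek_gt0 : 0 < expR (k * s) := expR_gt0 _.
have eps_gt0 : 0 < eps by rewrite divr_gt0 // mulr_gt0 //; lra.
have small : g eps s * frobsq x <= e.
  have -> : g eps s * frobsq x = e * frobsq x / (frobsq x + 1).
    by rewrite /g /eps; field; rewrite !gt_eqF ?expR_gt0 //; lra.
  by rewrite ler_pdivrMr; nra.
by have := E_psd eps_gt0 a_s s_b x; rewrite qformE; lra.
Qed.

End PsdFlow.
End LinearFlows.

Ltac mx_ring :=
  rewrite ?(mulmxDl, mulmxDr, mulmxBl, mulmxBr, mulmxN, mulNmx, mulmxA);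
  apply/matrixP => ? ?; rewrite !mxE; ring.

Section RiccatiAlgebra.
Variables (R : comUnitRingType) (n : nat) (G1 G2 Q : 'M[R]_n).
Hypotheses (Q_sym : Q^T = Q) (G2_sym : G2^T = G2).
Implicit Types V W : 'M[R]_n.

Definition riccati V := - (G1 *m V) - V *m G1^T - Q - V *m G2 *m V.
Definition inv_riccati W := W *m G1 + G1^T *m W + W *m Q *m W + G2.

Lemma riccati_invmx V : V \in unitmx ->
  - (invmx V *m riccati V *m invmx V) = inv_riccati (invmx V).
Proof.
move=> V_unit; rewrite /riccati /inv_riccati.
rewrite ?(mulmxDl, mulmxDr, mulmxBl, mulmxBr, mulmxN, mulNmx, mulmxA).
rewrite -!(mulmxA _ V (invmx V)) !(mulmxV V_unit, mulVmx V_unit, mulmx1, mul1mx).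
by apply/matrixP => ? ?; rewrite !mxE; ring.
Qed.

Lemma trmx_riccati V : V^T = V -> (riccati V)^T = riccati V.
Proof. by move=> V_sym; rewrite !linearB !linearN /= !trmx_mul !trmxK V_sym Q_sym G2_sym; mx_ring. Qed.

Lemma trmx_inv_riccati W : W^T = W -> (inv_riccati W)^T = inv_riccati W.
Proof. by move=> W_sym; rewrite !linearD /= !trmx_mul !trmxK W_sym Q_sym G2_sym; mx_ring. Qed.

Lemma riccati_skew V :
  riccati V - (riccati V)^T =
  - (G1 + V^T *m G2) *m (V - V^T) + (V - V^T) *m - (G1^T + G2 *m V).
Proof. by rewrite !linearB !linearN /= !trmx_mul !trmxK Q_sym G2_sym; mx_ring. Qed.

Lemma inv_riccati_skew W :
  inv_riccati W - (inv_riccati W)^T =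
  (G1^T + W^T *m Q) *m (W - W^T) + (W - W^T) *m (G1 + Q *m W).
Proof. by rewrite !linearD /= !trmx_mul !trmxK Q_sym G2_sym; mx_ring. Qed.

End RiccatiAlgebra.

Section RiccatiDerivatives.
Variables (R : realType) (n : nat) (G1 G2 Q : 'M[R]_n).
Hypotheses (Q_sym : Q^T = Q) (G2_sym : G2^T = G2).
Notation riccati := (riccati G1 G2 Q).
Notation inv_riccati := (inv_riccati G1 G2 Q).

Lemma is_mxderive_riccati (V : R -> 'M[R]_n) t :
  is_mxderive t V (riccati (V t)) -> (V t)^T = V t ->
  is_mxderive t (fun u => - riccati (V u))
    ((- (G1^T + G2 *m V t))^T *m - riccati (V t) + - riccati (V t) *m - (G1^T + G2 *m V t)).
Proof.
move=> dV V_sym.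
apply: (eq_rect _ (is_mxderive t _) (is_mxderiveN (is_mxderiveB (is_mxderiveB (is_mxderiveB
  (is_mxderiveN (is_mxderiveM (is_mxderive_cst G1 t) dV)) (is_mxderiveM dV (is_mxderive_cst G1^T t)))
  (is_mxderive_cst Q t)) (is_mxderiveM (is_mxderiveM dV (is_mxderive_cst G2 t)) dV)))).
rewrite [(- _)^T]linearN /= [(G1^T + _)^T]linearD /= trmxK trmx_mul V_sym G2_sym.
by rewrite /riccati !(mul0mx, mulmx0, addr0, add0r, subr0, sub0r); mx_ring.
Qed.

Lemma is_mxderive_inv_riccati (W : R -> 'M[R]_n) t :
  is_mxderive t W (inv_riccati (W t)) -> (W t)^T = W t ->
  is_mxderive t (fun u => inv_riccati (W u))
    ((G1 + Q *m W t)^T *m inv_riccati (W t) + inv_riccati (W t) *m (G1 + Q *m W t)).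
Proof.
move=> dW W_sym.
apply: (eq_rect _ (is_mxderive t _) (is_mxderiveD (is_mxderiveD (is_mxderiveD
  (is_mxderiveM dW (is_mxderive_cst G1 t)) (is_mxderiveM (is_mxderive_cst G1^T t) dW))
  (is_mxderiveM (is_mxderiveM dW (is_mxderive_cst Q t)) dW)) (is_mxderive_cst G2 t))).
rewrite [(G1 + _)^T]linearD /= trmx_mul W_sym Q_sym.
by rewrite /inv_riccati !(mul0mx, mulmx0, addr0, add0r); mx_ring.
Qed.

Lemma is_mxderive_riccati_skew (V : R -> 'M[R]_n) t :
  is_mxderive t V (riccati (V t)) ->
  is_mxderive t (fun u => V u - (V u)^T)
    (- (G1 + (V t)^T *m G2) *m (V t - (V t)^T) + (V t - (V t)^T) *m - (G1^T + G2 *m V t)).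
Proof.
move=> dV; rewrite -(riccati_skew G1 Q_sym G2_sym).
exact: is_mxderiveB dV (is_mxderive_trmx dV).
Qed.

Lemma is_mxderive_inv_riccati_skew (W : R -> 'M[R]_n) t :
  is_mxderive t W (inv_riccati (W t)) ->
  is_mxderive t (fun u => W u - (W u)^T)
    ((G1^T + (W t)^T *m Q) *m (W t - (W t)^T) + (W t - (W t)^T) *m (G1 + Q *m W t)).
Proof.
move=> dW; rewrite -(inv_riccati_skew G1 Q_sym G2_sym).
exact: is_mxderiveB dW (is_mxderive_trmx dW).
Qed.

Lemma mxcvg_riccati (T : Type) (F : set_system T) {FF : Filter F} (V : T -> 'M[R]_n) M :
  mxcvg F V M -> mxcvg F (fun u => riccati (V u)) (riccati M).
Proof.
move=> VM; apply: mxcvgB (mxcvgM (mxcvgM VM (mxcvg_cst (M := G2))) VM).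
apply: mxcvgB (mxcvg_cst (M := Q)).
exact: mxcvgB (mxcvgN (mxcvgM (mxcvg_cst (M := G1)) VM)) (mxcvgM VM (mxcvg_cst (M := G1^T))).
Qed.

Lemma mxcvg_inv_riccati (T : Type) (F : set_system T) {FF : Filter F} (W : T -> 'M[R]_n) M :
  mxcvg F W M -> mxcvg F (fun u => inv_riccati (W u)) (inv_riccati M).
Proof.
move=> WM; apply: mxcvgD (mxcvg_cst (M := G2)).
apply: mxcvgD (mxcvgM (mxcvgM WM (mxcvg_cst (M := Q))) WM).
exact: mxcvgD (mxcvgM WM (mxcvg_cst (M := G1))) (mxcvgM (mxcvg_cst (M := G1^T)) WM).
Qed.

End RiccatiDerivatives.

Section RiccatiMonotone.
Variables (R : realType) (n : nat) (G1 G2 Q : 'M[R]_n).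
Hypotheses (Q_sym : Q^T = Q) (G2_sym : G2^T = G2) (G2_psd : psd G2).
Notation riccati := (riccati G1 G2 Q).
Notation inv_riccati := (inv_riccati G1 G2 Q).

Variables (V : R -> 'M[R]_n) (t t0 : R).
Hypotheses (t0_gt0 : 0 < t0) (t0_lt_t : t0 < t)
  (V_der : forall u : R, 0 < u -> u <= t -> is_mxderive u V (riccati (V u)))
  (V_unit : forall u : R, 0 < u -> u <= t0 -> \forall v \near u, V v \in unitmx)
  (invV_lim : mxcvg 0^'+ (fun u => invmx (V u)) 0).

Let invV_der (u : R) : 0 < u -> u <= t0 ->
  is_mxderive u (fun v => invmx (V v)) (inv_riccati (invmx (V u))).
Proof.
move=> u_gt0 u_t0; rewrite -riccati_invmx; last exact: nbhs_singleton (V_unit u_gt0 u_t0).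
by apply: is_mxderive_invmx; [apply: V_der => //; exact: le_trans u_t0 (ltW t0_lt_t) | exact: V_unit].
Qed.

Let invV_cont (u : R) : 0 < u -> u <= t0 -> mxcvg (nbhs u) (fun v => invmx (V v)) (invmx (V u)).
Proof. by move=> u_gt0 u_t0; exact: is_mxderive_continuous (invV_der u_gt0 u_t0). Qed.

Let invV_coef_bounded :
  exists c, forall u, 0 < u -> u <= t0 -> mxnorm1 (G1 + Q *m invmx (V u)) <= c.
Proof.
apply: (mxnorm1_bounded (f := fun v => G1 + Q *m invmx (V v)) t0_gt0).
  move=> v v_gt0 v_t0; apply: mxcvgD (mxcvg_cst (M := G1)) _.
  exact: mxcvgM (mxcvg_cst (M := Q)) (invV_cont v_gt0 v_t0).
exact: mxcvgD (mxcvg_cst (M := G1)) (mxcvgM (mxcvg_cst (M := Q)) invV_lim).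
Qed.

Let invV_sym (u : R) : 0 < u -> u <= t0 -> (invmx (V u))^T = invmx (V u).
Proof.
have [cA A_le] := invV_coef_bounded.
have [cB B_le] := mxnorm1_bounded (f := fun v => G1^T + (invmx (V v))^T *m Q) t0_gt0
  (fun v v_gt0 v_t0 => mxcvgD (mxcvg_cst (M := G1^T))
     (mxcvgM (mxcvg_trmx (invV_cont v_gt0 v_t0)) (mxcvg_cst (M := Q))))
  (mxcvgD (mxcvg_cst (M := G1^T)) (mxcvgM (mxcvg_trmx invV_lim) (mxcvg_cst (M := Q)))).
move=> u_gt0 u_t0; apply/eqP; rewrite eq_sym -subr_eq0; apply/eqP.
apply: (mxflow_vanish (Z := fun v => invmx (V v) - (invmx (V v))^T) _ A_le B_le _ u_gt0 u_t0).
  by move=> v v_gt0 v_t0; exact: is_mxderive_inv_riccati_skew (invV_der v_gt0 v_t0).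
by rewrite -[0 in X in mxcvg _ _ X](subr0 0) -{2}trmx0; exact: mxcvgB invV_lim (mxcvg_trmx invV_lim).
Qed.

Let V_sym_start (u : R) : 0 < u -> u <= t0 -> (V u)^T = V u.
Proof.
move=> u_gt0 u_t0; have invVT : invmx (V u)^T = invmx (V u) by rewrite -trmx_inv invV_sym.
by rewrite -(invmxK (V u)^T) invVT invmxK.
Qed.

Let inv_riccati_psd : psd (inv_riccati (invmx (V t0))).
Proof.
have [c A_le] := invV_coef_bounded.
apply: (psd_flow (D := fun u => inv_riccati (invmx (V u)))
          (A := fun u => G1 + Q *m invmx (V u)) (D0 := inv_riccati 0) _ _ A_le
          _ _ t0_gt0 (lexx t0)).
- by move=> u u_gt0 u_t0; exact: trmx_inv_riccati (invV_sym u_gt0 u_t0).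
- move=> u u_gt0 u_t0.
  by apply: (is_mxderive_inv_riccati Q_sym); [exact: invV_der | exact: invV_sym].
- exact: mxcvg_inv_riccati invV_lim.
- by rewrite /inv_riccati !(mul0mx, mulmx0, add0r).
Qed.

Let riccati_nsd_start : psd (- riccati (V t0)).
Proof.
have V_unit_t0 := nbhs_singleton (V_unit t0_gt0 (lexx t0)).
have -> : - riccati (V t0) = (V t0)^T *m inv_riccati (invmx (V t0)) *m V t0.
  rewrite V_sym_start // -riccati_invmx // mulmxN mulNmx !mulmxA mulmxV // mul1mx.
  by rewrite -mulmxA mulVmx // mulmx1.
exact: psd_congr inv_riccati_psd.
Qed.

Let V_cont (u : R) : 0 < u -> u <= t -> mxcvg (nbhs u) V (V u).
Proof. by move=> u_gt0 u_t; exact: is_mxderive_continuous (V_der u_gt0 u_t). Qed.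

Let V_coef_bounded :
  exists c, forall u, t0 < u -> u <= t -> mxnorm1 (- (G1^T + G2 *m V u)) <= c.
Proof.
apply: (mxnorm1_bounded (f := fun v => - (G1^T + G2 *m V v)) t0_lt_t).
  move=> u t0_u u_t; apply: mxcvgN; apply: mxcvgD (mxcvg_cst (M := G1^T)) _.
  exact: mxcvgM (mxcvg_cst (M := G2)) (V_cont (lt_trans t0_gt0 t0_u) u_t).
apply: mxcvg_at_right; apply: mxcvgN; apply: mxcvgD (mxcvg_cst (M := G1^T)) _.
exact: mxcvgM (mxcvg_cst (M := G2)) (V_cont t0_gt0 (ltW t0_lt_t)).
Qed.

Let V_sym (u : R) : 0 < u -> u <= t -> (V u)^T = V u.
Proof.
move=> u_gt0 u_t; case: (lerP u t0) => [u_t0 | t0_u]; first exact: V_sym_start.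
have [cA A_le] := V_coef_bounded.
have [cB B_le] : exists c, forall v, t0 < v -> v <= t -> mxnorm1 (- (G1 + (V v)^T *m G2)) <= c.
  apply: (mxnorm1_bounded (f := fun v => - (G1 + (V v)^T *m G2)) t0_lt_t).
    move=> v t0_v v_t; apply: mxcvgN; apply: mxcvgD (mxcvg_cst (M := G1)) _.
    exact: mxcvgM (mxcvg_trmx (V_cont (lt_trans t0_gt0 t0_v) v_t)) (mxcvg_cst (M := G2)).
  apply: mxcvg_at_right; apply: mxcvgN; apply: mxcvgD (mxcvg_cst (M := G1)) _.
  exact: mxcvgM (mxcvg_trmx (V_cont t0_gt0 (ltW t0_lt_t))) (mxcvg_cst (M := G2)).
apply/eqP; rewrite eq_sym -subr_eq0; apply/eqP.
apply: (mxflow_vanish (Z := fun v => V v - (V v)^T) _ A_le B_le _ t0_u u_t).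
  move=> v t0_v v_t; apply: (is_mxderive_riccati_skew Q_sym G2_sym).
  exact: V_der (lt_trans t0_gt0 t0_v) v_t.
apply: mxcvg_at_right; rewrite -(subrr (V t0)) -{2}(V_sym_start t0_gt0 (lexx t0)).
exact: mxcvgB (V_cont t0_gt0 (ltW t0_lt_t)) (mxcvg_trmx (V_cont t0_gt0 (ltW t0_lt_t))).
Qed.

Lemma riccati_nsd : psd (- riccati (V t)).
Proof.
have [c A_le] := V_coef_bounded.
apply: (psd_flow (D := fun u => - riccati (V u)) (A := fun u => - (G1^T + G2 *m V u))
          (D0 := - riccati (V t0)) _ _ A_le _ riccati_nsd_start t0_lt_t (lexx t)).
- move=> u t0_u u_t; have u_gt0 := lt_trans t0_gt0 t0_u.
  by rewrite linearN /= (trmx_riccati G1 Q_sym G2_sym) ?V_sym.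
- move=> u t0_u u_t; have u_gt0 := lt_trans t0_gt0 t0_u.
  by apply: is_mxderive_riccati => //; [exact: V_der | exact: V_sym].
- apply: mxcvg_at_right; apply: mxcvgN.
  exact: mxcvg_riccati (V_cont t0_gt0 (ltW t0_lt_t)).
Qed.

End RiccatiMonotone.

Section YoungDiagram.
Variables (R : realType) (s : seq nat).

Lemma trmx_Gamma2 : (Gamma2 R s)^T = Gamma2 R s.
Proof.
apply/matrixP => i j; rewrite !mxE eq_sym.
by case: (box_pos s i == 0)%N; case: (box_pos s j == 0)%N; rewrite ?andbT ?andbF.
Qed.

(* Boxes are determined by their row and position, so Gamma2 is diagonal. *)
Lemma Gamma2_offdiag (i j : 'I_(sumn s)) : i != j -> Gamma2 R s i j = 0.
Proof.
move=> ij; rewrite mxE; case: (boolP [&& _, _ & _]) => //= /and3P [/eqP hr /eqP hp /eqP hq].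
case/eqP: ij; apply/val_inj => /=.
by rewrite -(reshape_indexK s i) -(reshape_indexK s j) -/(box_row s i) -/(box_pos s i)
  -/(box_row s j) -/(box_pos s j) hr hp hq.
Qed.

Lemma psd_Gamma2 : psd (Gamma2 R s).
Proof.
move=> x; rewrite /qform bformE; apply: sumr_ge0 => i _.
rewrite (bigD1 i) //= big1 ?addr0 => [|j ji]; last by rewrite Gamma2_offdiag 1?eq_sym // mulr0 mul0r.
by rewrite mulrAC -expr2 mulr_ge0 ?sqr_ge0 // mxE ler0n.
Qed.

End YoungDiagram.

Unset Implicit Arguments.

Theorem lemma4p14 (R : realType) (s : seq nat) (Hs : young_diagram s)
    (Q : 'M[R]_(sumn s)) (HQ : Q^T = Q)
    (T : \bar R) (V : R -> 'M[R]_(sumn s)) :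
  riccati_maximal Q T V ->
  forall t : R, 0 < t -> (t%:E < T)%E -> nsd (mxderiv V t).
Proof.
move=> [[_ [V_ode [V_unit invV_lim]]] _] t t_gt0 t_T.
have V_der u : 0 < u -> u <= t -> is_mxderive u V (riccati (Gamma1 R s) (Gamma2 R s) Q (V u)).
  move=> u_gt0 u_t i j; have [dV V'] := V_ode u u_gt0 (le_lt_trans (u_t : (u%:E <= t%:E)%E) t_T) i j.
  by apply: DeriveDef => //; rewrite -derive1E V'.
have -> : mxderiv V t = riccati (Gamma1 R s) (Gamma2 R s) Q (V t).
  by apply/matrixP => i j; rewrite mxE; exact: (V_ode t t_gt0 t_T i j).2.
have [t0 [t0_gt0 t0_t V_unit_t0]] := near_at_right_start t_gt0 V_unit.
have : psd (- riccati (Gamma1 R s) (Gamma2 R s) Q (V t)).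
  apply: (riccati_nsd HQ (@trmx_Gamma2 R s) (@psd_Gamma2 R s) t0_gt0 t0_t V_der V_unit_t0).
  by move=> i j; rewrite mxE; exact: invV_lim.
by move=> nsd_t x; have := nsd_t x; rewrite qformN oppr_ge0.
Qed.
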